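(* Let $q>27$ be an odd prime power and let $k$ be an integer satisfying $$(q^2-q+1)\left\lceil\frac{8(q+1)}{q-1}\log q\right\rceil\leq k\leq q^3+1,$$ where $\log$ denotes the natural logarithm. Then $\mathrm{PG}(2,q^2)$ contains semiovals of size $k$.
   Context: $\mathrm{PG}(2,q^2)$ is the Desarguesian projective plane over $\mathbb{F}_{q^2}$. A semioval is a non-empty pointset $\mathcal{S}$ such that for every $P\in\mathcal{S}$ there is a unique line $t_P$ with $\mathcal{S}\cap t_P=\{P\}$. *)

From Stdlib Require Import Reals ZArith.
From mathcomp Require Import all_boot all_algebra.
Set Implicit Arguments. Unset Strict Implicit. Unset Printing Implicit Defensive.
Import GRing.Theory.

(* Ceiling of a real number: ceil x = - floor (- x), where Stdlib's
   Int_part is the floor function (Int_part r = up r - 1). *)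
Definition ceilR (x : R) : Z := Z.opp (Int_part (Ropp x)).

Definition semioval_lb (q : nat) : Z :=
  Z.mul (Z.of_nat (q * q - q + 1))
        (ceilR (Rmult (Rdiv (Rmult 8 (Rplus (INR q) 1)) (Rminus (INR q) 1))
                      (ln (INR q)))).

(* PG(2,F): points (and, dually, lines) are the 1-dimensional subspaces of
   F^3, represented by their unique normalized spanning vector: the first
   nonzero coordinate equals 1. *)
Definition normalized (F : fieldType) (v : 'rV[F]_3) : bool :=
  [exists i : 'I_3, (v ord0 i == 1%R) && [forall j : 'I_3, (j < i)%N ==> (v ord0 j == 0%R)]].

Definition incident (F : fieldType) (P l : 'rV[F]_3) : bool :=
  (\sum_(i < 3) P ord0 i * l ord0 i == 0)%R.

Definition is_semioval (F : finFieldType) (S : {set 'rV[F]_3}) : Prop :=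
  [/\ (forall P, P \in S -> normalized P),
      S != set0 &
      forall P, P \in S ->
        exists! l : 'rV[F]_3, normalized l /\ [set X in S | incident X l] = [set P]].

(* Let U be the Hermitian curve y + y^q = x^(q+1) of PG(2, q^2) together with
   its point at infinity, and N, T the norm and trace of F_(q^2) over F_q.
   The identity N x - T (m x) = N (x - m^q) - N m shows that the affine points
   of U on a non-tangent line y = m x + b through a point P of U lie above the
   "circle" {x | N (x - m^q) = N (x_P - m^q)}, which has q + 1 elements. Hence,
   if A meets every circle in two points, every point set between U and its
   A-skeleton (the point at infinity, all points of U above A and one point of
   U above each other abscissa) is a semioval, its tangents being those of U.
   The skeleton has at most 1 + q|A| + (q^2 - |A|) points, and counting
   a-tuples with a = q (L - 2), L the ceiling in the lower bound, shows that
   the range of some a-tuple is such an A. *)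

From Stdlib Require Import Reals Lra Lia ZArith.

Section Budget.
Local Open Scope R_scope.

Lemma exp_INR_mul (n : nat) (x : R) : exp (INR n * x) = exp x ^ n.
Proof.
induction n as [|n IH].
- simpl. rewrite Rmult_0_l, exp_0. reflexivity.
- rewrite S_INR, Rmult_plus_distr_r, Rmult_1_l, exp_plus, IH. simpl. ring.
Qed.

Lemma exp_le x y : x <= y -> exp x <= exp y.
Proof.
intros H; destruct (Rle_lt_or_eq_dec _ _ H) as [h|h].
- left; apply exp_increasing; exact h.
- rewrite h; right; reflexivity.
Qed.

Lemma pow_pred_le_exp (Q : R) (a : nat) :
  1 <= Q -> (Q - 1) ^ a <= Q ^ a * exp (- (INR a / Q)).
Proof.
intros HQ.
assert (h1 : Q - 1 <= Q * exp (- (1 / Q))).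
{ pose proof (exp_ineq1_le (- (1 / Q))) as H.
  apply Rmult_le_compat_l with (r := Q) in H; [|lra].
  replace (Q * (1 + - (1 / Q))) with (Q - 1) in H by (field; lra). exact H. }
replace (- (INR a / Q)) with (INR a * - (1 / Q)) by (field; lra).
rewrite exp_INR_mul, <- Rpow_mult_distr.
apply pow_incr; lra.
Qed.

Lemma pow8_exp_le (Q x : R) : 0 < Q -> 8 * ln Q <= x -> Q ^ 8 * exp (- (x - 2)) <= 9.
Proof.
intros HQ Hx.
assert (h8 : Q ^ 8 <= exp x).
{ rewrite <- (exp_ln Q) by lra. rewrite <- exp_INR_mul.
  apply exp_le. simpl (INR 8). lra. }
assert (he2 : exp 2 <= 9).
{ replace 2 with (INR 2 * 1) by (simpl; ring). rewrite exp_INR_mul.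
  pose proof exp_le_3. pose proof (exp_pos 1). simpl. nra. }
apply Rle_trans with (exp x * exp (- (x - 2))).
- apply Rmult_le_compat_r; [left; apply exp_pos | exact h8].
- rewrite <- exp_plus. replace (x + - (x - 2)) with 2 by ring. exact he2.
Qed.

Lemma random_tuple_bound (q L : nat) :
  (28 <= q)%nat -> 8 * ln (INR q) <= INR L -> (2 <= L)%nat ->
  INR q ^ 4 * ((INR q ^ 2 + 1) * (INR q ^ 2 - INR q) ^ (q * (L - 2)))
    < (INR q ^ 2) ^ (q * (L - 2)).
Proof.
intros hq hL h2.
set (a := (q * (L - 2))%nat). set (Q := INR q) in *.
assert (HQ : 28 <= Q) by (unfold Q; replace 28 with (INR 28) by (simpl; ring); apply le_INR; exact hq).
assert (ha : INR a / Q = INR L - 2).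
{ unfold a. rewrite mult_INR, minus_INR by lia. fold Q. simpl (INR 2). field. lra. }
set (u := exp (- (INR L - 2))).
assert (hu : 0 <= u) by (left; apply exp_pos).
assert (hpred : (Q - 1) ^ a <= Q ^ a * u).
{ unfold u; rewrite <- ha. apply pow_pred_le_exp; lra. }
assert (h9 : Q ^ 8 * u <= 9) by (apply pow8_exp_le; lra).
assert (hsmall : Q ^ 4 * (Q ^ 2 + 1) * u < 1).
{ assert (hQ2 : 28 * 28 <= Q ^ 2) by (simpl; nra).
  assert (hQ4 : 9 * (Q ^ 2 + 1) < Q ^ 4) by (replace (Q ^ 4) with (Q ^ 2 * Q ^ 2) by ring; nra).
  replace (Q ^ 8) with (Q ^ 4 * Q ^ 4) in h9 by ring.
  apply Rmult_lt_reg_r with (Q ^ 4); [lra|]. nra. }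
replace (Q ^ 2 - Q) with (Q * (Q - 1)) by ring.
rewrite Rpow_mult_distr, <- pow_mult, Nat.mul_comm, pow_mult.
set (X := Q ^ a) in *. set (Y := (Q - 1) ^ a) in *.
assert (hX : 0 < X) by (apply pow_lt; lra).
assert (hY : 0 <= Y) by (apply pow_le; lra).
assert (hQ : 0 < Q ^ 4 * (Q ^ 2 + 1)) by (apply Rmult_lt_0_compat; [apply pow_lt|]; nra).
apply Rle_lt_trans with (Q ^ 4 * (Q ^ 2 + 1) * u * (X * X)).
- replace (Q ^ 4 * (Q ^ 2 + 1) * u * (X * X)) with (Q ^ 4 * (Q ^ 2 + 1) * (X * (X * u))) by ring.
  rewrite <- Rmult_assoc. apply Rmult_le_compat_l; [lra|]. apply Rmult_le_compat_l; lra.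
- replace (X ^ 2) with (1 * (X * X)) by ring.
  apply Rmult_lt_compat_r; [nra | exact hsmall].
Qed.

Lemma random_tuple_bound_nat (q L : nat) :
  (28 <= q)%nat -> 8 * ln (INR q) <= INR L -> (2 <= L)%nat ->
  ((q * q) ^ 2 * (S (q * q) * (q * q - q) ^ (q * (L - 2))) < (q * q) ^ (q * (L - 2)))%nat.
Proof.
intros hq hL h2. apply INR_lt.
rewrite !mult_INR, !pow_INR, S_INR, minus_INR, !mult_INR by nia.
replace (INR q * INR q) with (INR q ^ 2) by ring.
replace ((INR q ^ 2) ^ 2) with (INR q ^ 4) by ring.
exact (random_tuple_bound q L hq hL h2).
Qed.

Lemma ceilR_ge x : x <= IZR (ceilR x).
Proof.
unfold ceilR. destruct (base_Int_part (- x)) as [h _].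
rewrite opp_IZR. lra.
Qed.

Lemma semioval_lb_ceil (q k : nat) : (28 <= q)%nat -> Z.le (semioval_lb q) (Z.of_nat k) ->
  exists L, (2 <= L)%nat /\ 8 * ln (INR q) <= INR L /\ ((q * q - q + 1) * L <= k)%nat.
Proof.
intros hq hk. unfold semioval_lb in hk.
set (r := 8 * (INR q + 1) / (INR q - 1) * ln (INR q)) in *.
assert (HQ : 28 <= INR q) by (replace 28 with (INR 28) by (simpl; ring); apply le_INR; exact hq).
assert (hln : 1 < ln (INR q)).
{ rewrite <- ln_exp with 1. apply ln_increasing; [apply exp_pos|].
  pose proof exp_le_3. lra. }
assert (hr : 8 * ln (INR q) <= r).
{ assert (h1 : 1 <= (INR q + 1) / (INR q - 1)).
  { apply Rmult_le_reg_r with (INR q - 1); [lra|].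
    unfold Rdiv; rewrite Rmult_assoc, Rinv_l by lra. lra. }
  unfold r.
  replace (8 * (INR q + 1) / (INR q - 1) * ln (INR q))
    with (8 * ln (INR q) * ((INR q + 1) / (INR q - 1))) by (field; lra).
  nra. }
pose proof (ceilR_ge r) as hc.
assert (hLz : (0 <= ceilR r)%Z) by (apply le_IZR; lra).
exists (Z.to_nat (ceilR r)).
assert (hINR : INR (Z.to_nat (ceilR r)) = IZR (ceilR r)).
{ rewrite INR_IZR_INZ, Z2Nat.id by exact hLz. reflexivity. }
split; [|split].
- assert (1 < INR (Z.to_nat (ceilR r))) by lra.
  destruct (Z.to_nat (ceilR r)) as [|[|L]]; simpl in *; lra || lia.
- lra.
- apply Nat2Z.inj_le. rewrite Nat2Z.inj_mul, Z2Nat.id by exact hLz. exact hk.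
Qed.

End Budget.

From mathcomp Require Import all_boot all_algebra finfield ring zify.
Set Implicit Arguments. Unset Strict Implicit. Unset Printing Implicit Defensive.
Import GRing.Theory.
Local Open Scope ring_scope.

Section Counting.

Lemma card_uniform_fibers (T R : finType) (f : T -> R) (D : {set T}) d :
  (forall x, x \in D -> #|[set y in D | f y == f x]| = d) -> #|D| = (#|f @: D| * d)%N.
Proof.
move=> H; rewrite -sum1_card (partition_big_imset f) /= -sum_nat_const.
apply: eq_bigr => r /imsetP [x xD ->].
rewrite -(H x xD) -sum1_card; apply: eq_bigl => y; by rewrite inE.
Qed.

Lemma card_roots_lt_size (F : fieldType) (T : finType) (g : T -> F) (A : {set T}) (p : {poly F}) :
  p != 0 -> {in A &, injective g} -> (forall x, x \in A -> root p (g x)) -> (#|A| < size p)%N.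
Proof.
move=> p0 ginj H.
have := max_poly_roots p0 (rs := map g (enum A)).
rewrite size_map -cardE; apply.
  by apply/allP => x /mapP [y]; rewrite mem_enum => yA ->; exact: H.
rewrite map_inj_in_uniq ?enum_uniq // => x y; rewrite !mem_enum; exact: ginj.
Qed.

Lemma card_bigcup_le (I T : finType) (P : pred I) (B : I -> {set T}) :
  (#|\bigcup_(i | P i) B i| <= \sum_(i | P i) #|B i|)%N.
Proof.
elim/big_rec2: _ => [|i U s _ IH]; first by rewrite cards0.
apply: leq_trans (leq_card_setU _ _) _; by rewrite leq_add2l.
Qed.

Lemma card_pairs (T : finType) (P : T -> T -> bool) :
  #|[set xy : T * T | P xy.1 xy.2]| = (\sum_x #|[set y | P x y]|)%N.
Proof.
rewrite -sum1_card.
have -> : (\sum_x #|[set y | P x y]| = \sum_x \sum_(y | P x y) 1)%N.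
  by apply: eq_bigr => x _; rewrite -sum1_card; apply: eq_bigl => y; rewrite inE.
rewrite pair_big_dep /=; apply: eq_bigl => -[x y]; by rewrite inE.
Qed.

Lemma exists_set_between (T : finType) (A B : {set T}) k :
  A \subset B -> (#|A| <= k)%N -> (k <= #|B|)%N ->
  exists C : {set T}, [/\ A \subset C, C \subset B & #|C| = k].
Proof.
move=> AB Ak kB.
have [d kE] : exists d, k = (#|A| + d)%N by exists (k - #|A|)%N; lia.
subst k; clear Ak; elim: d kB => [|d IH] kB; first by exists A; rewrite addn0.
have [C [AC CB cC]] : exists C : {set T}, [/\ A \subset C, C \subset B & #|C| = (#|A| + d)%N].
  by apply: IH; lia.
have /properP [_ [x xB xC]] : C \proper B by rewrite properEcard CB cC /=; lia.
exists (x |: C); split.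
- exact: subset_trans AC (subsetUr _ _).
- by rewrite subUset sub1set xB CB.
- by rewrite cardsU1 xC cC addnS.
Qed.

Definition ffun_into (T : finType) (a : nat) (R : {set T}) :=
  [set g : {ffun 'I_a -> T} | [forall j, g j \in R]].

Lemma card_ffun_into (T : finType) a (R : {set T}) : #|ffun_into a R| = (#|R| ^ a)%N.
Proof.
rewrite -[in RHS](card_ord a) -card_ffun_on; apply: eq_card => g.
rewrite inE; apply/forallP/ffun_onP; by [].
Qed.

Definition meets_twice (T : finType) a (g : {ffun 'I_a -> T}) (E : {set T}) :=
  [exists x, exists y, [&& x != y, x \in E, y \in E, x \in g @: setT & y \in g @: setT]].

(* A tuple that does not take two distinct values in [E] takes all its values
   outside [E], or outside [E] but for one [e \in E]. *)
Lemma card_not_meets_twice (T : finType) a (E : {set T}) :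
  (#|[set g : {ffun 'I_a -> T} | ~~ meets_twice g E]| <=
     #|~: E| ^ a + #|E| * (#|~: E|.+1) ^ a)%N.
Proof.
set B := [set g | _].
have sub : B \subset ffun_into a (~: E) :|: \bigcup_(e in E) ffun_into a (e |: ~: E).
  apply/subsetP => g; rewrite inE => ng; rewrite inE.
  case: (pickP (fun x => (x \in E) && (x \in g @: setT))) => [e /andP [eE eg] | none].
    apply/orP; right; apply/bigcupP; exists e => //.
    rewrite inE; apply/forallP => j; rewrite !inE.
    case: (boolP (g j \in E)) => gjE; rewrite ?orbT // orbF.
    apply: contraR ng => ne; apply/existsP; exists (g j); apply/existsP; exists e.
    by rewrite ne gjE eE eg imset_f.
  apply/orP; left; rewrite inE; apply/forallP => j; rewrite inE.
  by have := none (g j); rewrite imset_f // andbT => ->.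
apply: leq_trans (subset_leq_card sub) _.
apply: leq_trans (leq_card_setU _ _) _; rewrite card_ffun_into leq_add2l.
apply: leq_trans (card_bigcup_le (fun e => e \in E) (fun e => ffun_into a (e |: ~: E))) _.
rewrite -sum_nat_const; apply: leq_sum => e eE.
by rewrite card_ffun_into cardsU1 inE eE.
Qed.

(* First moment method: the [a]-tuples failing to meet some [E i] twice are
   fewer than all [a]-tuples, so the range of some tuple meets every [E i] twice. *)
Lemma exists_set_meeting_twice (T I : finType) (E : I -> {set T}) a c :
  (forall i, c.+1 <= #|E i|)%N ->
  (#|I| * (#|T|.+1 * (#|T| - c) ^ a) < #|T| ^ a)%N ->
  exists A : {set T}, (#|A| <= a)%N /\
    forall i, exists x y, [/\ x != y, x \in A :&: E i & y \in A :&: E i].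
Proof.
move=> Ec Hc.
set U := \bigcup_i [set g : {ffun 'I_a -> T} | ~~ meets_twice g (E i)].
have cU : (#|U| < #|T| ^ a)%N.
  apply: leq_ltn_trans (card_bigcup_le _ _) _.
  apply: leq_ltn_trans Hc; rewrite -sum_nat_const; apply: leq_sum => i _.
  apply: leq_trans (card_not_meets_twice _ _) _.
  have s1 := Ec i; have s2 : (#|E i| <= #|T|)%N by exact: max_card.
  have cc : #|~: E i| = (#|T| - #|E i|)%N by rewrite cardsCs setCK.
  rewrite cc mulSn leq_add //.
    by case: (a) => [|a']; rewrite ?expn0 // leq_exp2r //; lia.
  by apply: leq_mul => //; case: (a) => [|a']; rewrite ?expn0 // leq_exp2r //; lia.
have [g gU | none] := pickP (fun g => g \notin U); last first.
  have : (#|[set: {ffun 'I_a -> T}]| <= #|U|)%N.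
    by apply: subset_leq_card; apply/subsetP => g _; have := none g => /negbFE.
  by rewrite cardsT card_ffun card_ord leqNgt cU.
exists (g @: setT); split.
  by apply: leq_trans (leq_imset_card _ _) _; rewrite cardsT card_ord.
move=> i; have : meets_twice g (E i).
  by apply: contraR gU => ng; apply/bigcupP; exists i => //; rewrite inE.
case/existsP => x /existsP [y] /and5P [xy xE yE xg yg].
by exists x, y; rewrite !inE xy xE yE xg yg.
Qed.

End Counting.

Section NormTrace.
Variables (F : finFieldType) (q : nat).
Hypothesis qpchar : [pchar F].-nat q.
Hypothesis cardF : #|F| = (q * q)%N.
Hypothesis q_gt1 : (1 < q)%N.

Definition normq (x : F) := x ^+ q.+1.
Definition traceq (y : F) := y + y ^+ q.

Lemma frobB (x y : F) : (x - y) ^+ q = x ^+ q - y ^+ q.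
Proof. by rewrite exprDn_pchar // exprNn_pchar. Qed.

Lemma frobK (x : F) : (x ^+ q) ^+ q = x.
Proof. by rewrite -exprM -cardF expf_card. Qed.

Lemma normqE x : normq x = x * x ^+ q.
Proof. by rewrite /normq exprS. Qed.

Lemma normqM x y : normq (x * y) = normq x * normq y.
Proof. by rewrite /normq exprMn. Qed.

Lemma normq_frob x : normq x ^+ q = normq x.
Proof. by rewrite normqE exprMn frobK mulrC. Qed.

Lemma normq_eq0 x : (normq x == 0) = (x == 0).
Proof. by rewrite /normq expf_eq0. Qed.

Lemma traceq_frob y : traceq y ^+ q = traceq y.
Proof. by rewrite /traceq exprDn_pchar // frobK addrC. Qed.

Lemma traceqD x y : traceq (x + y) = traceq x + traceq y.
Proof. rewrite /traceq exprDn_pchar //; ring. Qed.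

Lemma traceqB x y : traceq (x - y) = traceq x - traceq y.
Proof. rewrite /traceq frobB; ring. Qed.

Lemma normq_sub_traceq (x m : F) : normq x - traceq (m * x) = normq (x - m ^+ q) - normq m.
Proof. rewrite !normqE frobB frobK /traceq exprMn; ring. Qed.

Definition fixedq := [set x : F | x ^+ q == x].

Lemma card_fixedq_le : (#|fixedq| <= q)%N.
Proof.
have sz : size ('X^q - 'X : {poly F}) = q.+1.
  by rewrite size_polyDl ?size_polyXn // size_polyN size_polyX ltnS.
rewrite -ltnS -sz; apply: (card_roots_lt_size (g := id)) => //.
  by rewrite -size_poly_eq0 sz.
by move=> x; rewrite inE /root !hornerE subr_eq0.
Qed.

Definition ker_traceq := [set y : F | traceq y == 0].

Lemma card_ker_traceq_le : (#|ker_traceq| <= q)%N.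
Proof.
have sz : size ('X^q + 'X : {poly F}) = q.+1.
  by rewrite size_polyDl ?size_polyXn // size_polyX ltnS.
rewrite -ltnS -sz; apply: (card_roots_lt_size (g := id)) => //.
  by rewrite -size_poly_eq0 sz.
by move=> x; rewrite inE /root !hornerE /traceq addrC.
Qed.

Lemma traceq_fiberE y : [set y' | traceq y' == traceq y] = (fun u => u + y) @: ker_traceq.
Proof.
apply/setP => y'; rewrite inE; apply/eqP/imsetP.
  move=> e; exists (y' - y); last by rewrite subrK.
  by rewrite inE traceqB e subrr.
by move=> [u]; rewrite inE => /eqP u0 ->; rewrite traceqD u0 add0r.
Qed.

Lemma card_traceq_fiber y : #|[set y' | traceq y' == traceq y]| = #|ker_traceq|.
Proof. by rewrite traceq_fiberE card_imset //; exact: addIr. Qed.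

Lemma traceq_imset_sub : traceq @: [set: F] \subset fixedq.
Proof. by apply/subsetP => t /imsetP [y _ ->]; rewrite inE traceq_frob. Qed.

Lemma card_traceq_imset_ker : (q * q = #|traceq @: [set: F]| * #|ker_traceq|)%N.
Proof.
rewrite -cardF -cardsT; apply: card_uniform_fibers => x _.
by rewrite -(card_traceq_fiber x); apply: eq_card => y; rewrite !inE.
Qed.

Lemma card_ker_traceq : #|ker_traceq| = q.
Proof.
have e := card_traceq_imset_ker.
have hI := leq_trans (subset_leq_card traceq_imset_sub) card_fixedq_le.
have := leq_mul hI (leqnn #|ker_traceq|); have := card_ker_traceq_le; have := q_gt1.
nia.
Qed.

Lemma traceq_imset : traceq @: [set: F] = fixedq.
Proof.
apply/eqP; rewrite eqEcard traceq_imset_sub /=.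
have /eqP := card_traceq_imset_ker; rewrite card_ker_traceq eqn_pmul2r; last lia.
by move/eqP <-; exact: card_fixedq_le.
Qed.

Lemma traceq_surj t : t ^+ q = t -> exists y, traceq y = t.
Proof.
move=> tK; have : t \in traceq @: [set: F] by rewrite traceq_imset inE tK.
by case/imsetP => y _ ->; exists y.
Qed.

Lemma card_traceq_eq t : t ^+ q = t -> #|[set y | traceq y == t]| = q.
Proof. by move=> /traceq_surj [y <-]; rewrite card_traceq_fiber card_ker_traceq. Qed.

Lemma card_traceq_eq_le t : (#|[set y | traceq y == t]| <= q)%N.
Proof.
have [y /eqP <-|none] := pickP (fun y => traceq y == t).
  by rewrite card_traceq_fiber card_ker_traceq_le.
by rewrite (eq_card0 (A := [set y | traceq y == t])) // => y; rewrite inE none.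
Qed.

Definition ker_normq := [set u : F | normq u == 1].

Lemma normq_fiberE x : x != 0 ->
  [set y in [set z : F | z != 0] | normq y == normq x] = (fun u => x * u) @: ker_normq.
Proof.
move=> x0; apply/setP => y; rewrite !inE; apply/idP/imsetP.
  move=> /andP [y0 /eqP e]; exists (y / x); last by rewrite mulrC divfK.
  by rewrite inE normqM e -normqM divff // /normq expr1n.
move=> [u]; rewrite inE => /eqP u1 ->; rewrite normqM u1 mulr1 eqxx mulf_neq0 //.
by apply: contra_eq_neq u1 => ->; rewrite /normq expr0n /= eq_sym oner_eq0.
Qed.

Lemma card_ker_normq : (q.+1 <= #|ker_normq|)%N.
Proof.
set D := [set z : F | z != 0].
have cDN : #|D| = (#|normq @: D| * #|ker_normq|)%N.
  apply: card_uniform_fibers => x; rewrite inE => x0.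
  by rewrite normq_fiberE // card_imset //; exact: mulfI.
have cD : #|D| = (q * q).-1.
  have -> : D = [set~ 0] by apply/setP => z; rewrite !inE.
  by rewrite cardsC1 cardF.
have sub : normq @: D \subset fixedq :\ 0.
  apply/subsetP => t /imsetP [y]; rewrite inE => y0 ->.
  by rewrite !inE normq_frob eqxx andbT normq_eq0 y0.
have cK : #|fixedq :\ 0| = #|fixedq|.-1.
  have k0 : (0 : F) \in fixedq by rewrite inE expr0n; move: q_gt1; case: (q).
  by rewrite [in RHS](cardsD1 0 fixedq) k0.
have := subset_leq_card sub; have := card_fixedq_le; move: cDN.
rewrite cD cK; nia.
Qed.

Definition circle (z w : F) := [set z + w * u | u in ker_normq].

Lemma card_circle z w : w != 0 -> (q.+1 <= #|circle z w|)%N.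
Proof.
move=> w0; rewrite card_imset ?card_ker_normq // => u v /addrI; exact: mulfI.
Qed.

Lemma normq_circle z w x : x \in circle z w -> normq (x - z) = normq w.
Proof.
by case/imsetP => u; rewrite inE => /eqP u1 ->; rewrite addrC addKr normqM u1 mulr1.
Qed.

End NormTrace.

Section Coordinates.
Variable F : fieldType.

Definition i1 : 'I_3 := @Ordinal 3 1 isT.
Definition i2 : 'I_3 := @Ordinal 3 2 isT.
Definition vec3 (a b c : F) : 'rV[F]_3 := \row_(i < 3) [:: a; b; c]`_i.

Lemma vec3E (v : 'rV[F]_3) : v = vec3 (v ord0 ord0) (v ord0 i1) (v ord0 i2).
Proof.
apply/rowP => i; rewrite !mxE; case: i => [[|[|[|]]] Hi] //=; by congr (v _ _); apply/val_inj.
Qed.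

Lemma vec3_inj (a b c a' b' c' : F) :
  vec3 a b c = vec3 a' b' c' -> [/\ a = a', b = b' & c = c'].
Proof.
move=> e; have := congr1 (fun v : 'rV[F]_3 => v ord0 ord0) e.
have := congr1 (fun v : 'rV[F]_3 => v ord0 i1) e.
have := congr1 (fun v : 'rV[F]_3 => v ord0 i2) e.
by rewrite !mxE.
Qed.

Lemma scale_vec3 (k a b c : F) : k *: vec3 a b c = vec3 (k * a) (k * b) (k * c).
Proof. by apply/rowP => i; rewrite !mxE; case: i => [[|[|[|]]] Hi]. Qed.

Lemma incident_vec3 (a b c d e f : F) :
  incident (vec3 a b c) (vec3 d e f) = (a * d + b * e + c * f == 0).
Proof. by rewrite /incident !big_ord_recr big_ord0 /= !mxE add0r. Qed.

Lemma incidentZ (X l : 'rV[F]_3) k : k != 0 -> incident X (k *: l) = incident X l.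
Proof.
move=> k0; rewrite [X]vec3E [l]vec3E scale_vec3 !incident_vec3.
move: (X _ _) (X _ _) (X _ _) (l _ _) (l _ _) (l _ _) => a b c d e f.
rewrite [c * _]mulrCA [b * _]mulrCA [a * _]mulrCA -!mulrDr.
by rewrite mulf_eq0 (negbTE k0).
Qed.

Lemma normalized_neq0 (u : 'rV[F]_3) : normalized u -> u != 0.
Proof.
move=> /existsP [i /andP [/eqP ui _]]; apply/eqP => u0; move: ui; rewrite u0 mxE.
by move/eqP; rewrite eq_sym oner_eq0.
Qed.

Lemma normalized_scale_eq (u : 'rV[F]_3) k :
  normalized u -> normalized (k *: u) -> k *: u = u.
Proof.
move=> /existsP [i /andP [/eqP ui /forallP hi]] /existsP [j /andP [/eqP uj /forallP hj]].
move: uj; rewrite mxE => uj.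
have [lt|ge] := ltnP i j.
  move: (hj i); rewrite lt mxE ui mulr1 /= => /eqP k0.
  by move: uj; rewrite k0 mul0r => /eqP; rewrite eq_sym oner_eq0.
have [lt'|ge'] := ltnP j i.
  move: (hi j); rewrite lt' /= => /eqP uj0.
  by move: uj; rewrite uj0 mulr0 => /eqP; rewrite eq_sym oner_eq0.
have ij : i = j by apply/val_inj/eqP; rewrite eqn_leq ge ge'.
by move: uj; rewrite -ij ui mulr1 => ->; rewrite scale1r.
Qed.

Lemma normalized_vec3_1 (b c : F) : normalized (vec3 1 b c).
Proof.
apply/existsP; exists ord0; rewrite mxE /= eqxx /=.
by apply/forallP => -[[|[|]] Hj].
Qed.

Lemma normalized_vec3_001 : normalized (vec3 0 0 1).
Proof.
apply/existsP; exists i2; rewrite mxE /= eqxx /=.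
apply/forallP => j; apply/implyP; case: j => [[|[|]] Hj] //= _; by rewrite mxE.
Qed.

Lemma exists_normalized_scale (a b : F) : exists2 k, k != 0 & normalized (k *: vec3 a b 1).
Proof.
have [a0|a0] := eqVneq a 0; last first.
  exists a^-1; rewrite ?invr_eq0 // scale_vec3 mulVf //; exact: normalized_vec3_1.
have [b0|b0] := eqVneq b 0.
  by exists 1; rewrite ?oner_eq0 // scale_vec3 !mul1r a0 b0; exact: normalized_vec3_001.
exists b^-1; rewrite ?invr_eq0 //; apply/existsP; exists i1.
rewrite scale_vec3 !mxE /= mulVf // eqxx /=.
apply/forallP => j; apply/implyP; case: j => [[|[|]] Hj] //= _; by rewrite mxE /= a0 mulr0.
Qed.

End Coordinates.

Lemma eq_of_sub_comb (V : zmodType) (C D A1 B1 A2 B2 : V) :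
  A1 = B1 -> A2 = B2 -> C - D = (A1 - B1) - (A2 - B2) -> C = D.
Proof. by move=> h1 h2 e; apply/eqP; rewrite -subr_eq0 e h1 h2 !subrr. Qed.

Lemma sole_incident_point (F : finFieldType) (S0 S : {set 'rV[F]_3}) P l :
  S0 \subset S -> [set X in S | incident X l] = [set P] ->
  incident P l /\ forall X, X \in S0 -> incident X l -> X = P.
Proof.
move=> s0 e; split.
  have : P \in [set X in S | incident X l] by rewrite e set11.
  by rewrite inE => /andP [].
move=> X XS inc; have : X \in [set X in S | incident X l] by rewrite inE (subsetP s0 _ XS).
by rewrite e inE => /eqP.
Qed.

Section Hermitian.
Variables (F : finFieldType) (q : nat).
Hypothesis qpchar : [pchar F].-nat q.
Hypothesis cardF : #|F| = (q * q)%N.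
Hypothesis q_gt1 : (1 < q)%N.

Local Notation N := (@normq F q).
Local Notation T := (@traceq F q).

Definition pt (x y : F) := vec3 1 x y.
Definition pinf : 'rV[F]_3 := vec3 0 0 1.
Definition hermitian_aff := [set xy : F * F | T xy.2 == N xy.1].
Definition hermitian := pinf |: [set pt xy.1 xy.2 | xy in hermitian_aff].

Definition above (x : F) := odflt 0 [pick y | T y == N x].

Lemma traceq_above x : T (above x) = N x.
Proof.
rewrite /above; case: pickP => [y /eqP //|none].
have [y ty] := traceq_surj qpchar cardF q_gt1 (normq_frob cardF x).
by move: (none y); rewrite ty eqxx.
Qed.

Lemma pt_neq_pinf x y : pt x y != pinf.
Proof. by apply/eqP => /vec3_inj [/eqP]; rewrite oner_eq0. Qed.

Lemma pt_inj x y x' y' : pt x y = pt x' y' -> x = x' /\ y = y'.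
Proof. by move/vec3_inj => []. Qed.

Lemma in_hermitian X : X \in hermitian -> X = pinf \/ exists x y, T y = N x /\ X = pt x y.
Proof.
rewrite in_setU1 => /orP [/eqP ->|/imsetP [xy]]; first by left.
by rewrite inE => /eqP e ->; right; exists xy.1, xy.2.
Qed.

Definition skeleton (A : {set F}) : {set 'rV[F]_3} :=
  pinf |: ([set pt xy.1 xy.2 | xy in [set xy in hermitian_aff | xy.1 \in A]]
           :|: [set pt x (above x) | x in ~: A]).

Lemma skeleton_sub (A : {set F}) : skeleton A \subset hermitian.
Proof.
apply/subsetP => X; rewrite !inE => /orP [->//|/orP [|]] /imsetP [xy].
  by rewrite inE => /andP [xyU _] ->; apply/orP; right; apply/imsetP; exists xy.
move=> _ ->; apply/orP; right; apply/imsetP; exists (xy, above xy) => //.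
by rewrite inE traceq_above.
Qed.

Lemma pt_in_skeleton (A : {set F}) x y : x \in A -> T y = N x -> pt x y \in skeleton A.
Proof.
move=> xA e; rewrite !inE; apply/orP; right; apply/orP; left.
by apply/imsetP; exists (x, y) => //; rewrite !inE e eqxx xA.
Qed.

Lemma above_in_skeleton (A : {set F}) x : pt x (above x) \in skeleton A.
Proof.
have [xA|xA] := boolP (x \in A); first by apply: pt_in_skeleton => //; exact: traceq_above.
by rewrite !inE; apply/orP; right; apply/orP; right; apply/imsetP; exists x; rewrite ?inE.
Qed.

Lemma pinf_in_skeleton (A : {set F}) : pinf \in skeleton A.
Proof. by rewrite !inE eqxx. Qed.

Definition meets_circles_twice (A : {set F}) := forall z w, w != 0 ->
  exists x y, [/\ x != y, x \in A :&: circle q z w & y \in A :&: circle q z w].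

Definition tangent (x0 y0 : F) := vec3 (x0 ^+ q * x0 - y0) (- x0 ^+ q) 1.

Lemma incident_tangent x0 y0 : incident (pt x0 y0) (tangent x0 y0).
Proof. rewrite /tangent incident_vec3; apply/eqP; ring. Qed.

Lemma hermitian_on_tangent x0 y0 X : T y0 = N x0 -> X \in hermitian ->
  incident X (tangent x0 y0) -> X = pt x0 y0.
Proof.
move=> P0 /in_hermitian [->|[x [y [e ->]]]].
  by rewrite /pinf /tangent incident_vec3 !mul0r !add0r mul1r oner_eq0.
rewrite /tangent incident_vec3 mul1r mulr1 => /eqP inc.
set m := x0 ^+ q.
have yE : y = (m * x - m * x0) + y0 by apply: (eq_of_sub_comb inc (erefl 0)); rewrite /m; ring.
have k1 := normq_sub_traceq qpchar cardF x m; have k2 := normq_sub_traceq qpchar cardF x0 m.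
rewrite /m (frobK cardF) -/m subrr in k1 k2.
have : N (x - x0) = 0.
  rewrite yE (traceqD qpchar) (traceqB qpchar) in e.
  have h : N (x - x0) = N x - T (m * x) + N m by rewrite k1; ring.
  rewrite h -e P0; apply: (eq_of_sub_comb k2 (erefl 0)); rewrite /normq expr0n /=; ring.
move/eqP; rewrite normq_eq0 subr_eq0 => /eqP xx; subst x.
by rewrite yE subrr add0r.
Qed.

Lemma sole_line_at_pinf (A : {set F}) l0 l1 l2 : normalized (vec3 l0 l1 l2) ->
  incident pinf (vec3 l0 l1 l2) ->
  (forall X, X \in skeleton A -> incident X (vec3 l0 l1 l2) -> X = pinf) ->
  vec3 l0 l1 l2 = vec3 1 0 0.
Proof.
move=> nl; rewrite /pinf incident_vec3 !mul0r !add0r mul1r => /eqP l20 H; subst l2.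
have [l10|l10] := eqVneq l1 0.
  subst l1; have e : vec3 l0 0 0 = l0 *: vec3 1 0 (0 : F) by rewrite scale_vec3 mulr1 mulr0.
  by rewrite e; apply: normalized_scale_eq; rewrite -?e //; exact: normalized_vec3_1.
have := H (pt (- l0 / l1) (above _)) (above_in_skeleton A _).
rewrite incident_vec3 mul1r mulr0 addr0 divfK // subrr eqxx => /(_ isT) /eqP.
by rewrite (negbTE (pt_neq_pinf _ _)).
Qed.

(* A non-vertical line [y = m x + b] through [(x0, y0)] other than the tangent
   meets the curve above the circle of centre [m^q] through [x0]; [A] has a
   point [x <> x0] there, whose point on the curve lies in the skeleton. *)
Lemma sole_line_at_pt (A : {set F}) (hA : meets_circles_twice A) x0 y0 l0 l1 l2 :
  T y0 = N x0 -> incident (pt x0 y0) (vec3 l0 l1 l2) ->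
  (forall X, X \in skeleton A -> incident X (vec3 l0 l1 l2) -> X = pt x0 y0) ->
  vec3 l0 l1 l2 = l2 *: tangent x0 y0.
Proof.
move=> P0; rewrite incident_vec3 mul1r => /eqP inc H.
have l2n : l2 != 0.
  apply/eqP => l20; have := H pinf (pinf_in_skeleton A).
  rewrite incident_vec3 l20 !mul0r mulr0 !addr0 eqxx => /(_ isT) /eqP.
  by rewrite eq_sym (negbTE (pt_neq_pinf _ _)).
set m := - l1 / l2; set b := - l0 / l2.
have ml : l1 = - (m * l2) by rewrite /m divfK // opprK.
have bl : l0 = - (b * l2) by rewrite /b divfK // opprK.
have y0E : y0 = m * x0 + b.
  by apply: (mulIf l2n); apply: (eq_of_sub_comb inc (erefl 0)); rewrite ml bl; ring.
have [mq|mq] := eqVneq (m ^+ q) x0.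
  have mE : m = x0 ^+ q by rewrite -mq (frobK cardF).
  by rewrite /tangent scale_vec3 mulr1 bl ml y0E mE; congr vec3; ring.
set w := x0 - m ^+ q.
have w0 : w != 0 by rewrite subr_eq0 eq_sym.
have on_circle u : u \in A :&: circle q (m ^+ q) w -> u = x0.
  rewrite inE => /andP [uA /normq_circle cu].
  have inS : pt u (m * u + b) \in skeleton A.
    apply: pt_in_skeleton => //.
    have k1 := normq_sub_traceq qpchar cardF u m.
    have k2 := normq_sub_traceq qpchar cardF x0 m.
    rewrite cu -/w -k2 in k1.
    move: P0; rewrite y0E (traceqD qpchar) => P0.
    by rewrite (traceqD qpchar); apply: (eq_of_sub_comb P0 k1); ring.
  have := H _ inS; rewrite incident_vec3 mul1r ml bl.
  have -> : - (b * l2) + u * - (m * l2) + (m * u + b) * l2 = 0 by ring.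
  by rewrite eqxx => /(_ isT) /pt_inj [].
have [x [y [xy xc yc]]] := hA (m ^+ q) w w0.
by move: xy; rewrite (on_circle _ xc) (on_circle _ yc) eqxx.
Qed.

Section Between.
Variables (A : {set F}) (S : {set 'rV[F]_3}).
Hypotheses (hA : meets_circles_twice A) (s0 : skeleton A \subset S) (sU : S \subset hermitian).

Lemma tangent_unique_at_pinf :
  exists! l : 'rV[F]_3, normalized l /\ [set X in S | incident X l] = [set pinf].
Proof.
exists (vec3 1 0 0); split; first split.
- exact: normalized_vec3_1.
- apply/setP => X; rewrite !inE; apply/idP/idP.
    move=> /andP [XS]; case/in_hermitian: (subsetP sU _ XS) => [->|[x [y [_ ->]]]] //.
    by rewrite /pt incident_vec3 !mulr0 !addr0 mulr1 oner_eq0.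
  move/eqP => ->; rewrite (subsetP s0 _ (pinf_in_skeleton A)).
  by rewrite /pinf incident_vec3 !mulr0 !addr0 mulr1 eqxx.
move=> l [nl /(sole_incident_point s0) [inc H]].
by move: nl inc H; rewrite [l]vec3E => nl inc H; symmetry; exact: sole_line_at_pinf nl inc H.
Qed.

Lemma tangent_unique_at_pt x0 y0 : T y0 = N x0 -> pt x0 y0 \in S ->
  exists! l : 'rV[F]_3, normalized l /\ [set X in S | incident X l] = [set pt x0 y0].
Proof.
move=> P0 PS; have [k k0 nT] := exists_normalized_scale (x0 ^+ q * x0 - y0) (- x0 ^+ q).
exists (k *: tangent x0 y0); split; first split => //.
  apply/setP => X; rewrite !inE incidentZ //; apply/idP/idP.
    by move=> /andP [XS inc]; rewrite (hermitian_on_tangent P0 (subsetP sU _ XS) inc).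
  by move/eqP => ->; rewrite PS incident_tangent.
move=> l [nl /(sole_incident_point s0) [inc H]].
move: nl inc H; rewrite [l]vec3E => nl inc H.
rewrite (sole_line_at_pt hA P0 inc H) in nl *.
have l2n : l ord0 i2 != 0.
  by apply: contraTneq nl => ->; rewrite scale0r; apply/negP => /normalized_neq0; rewrite eqxx.
have : l ord0 i2 *: tangent x0 y0 = (l ord0 i2 / k) *: (k *: tangent x0 y0).
  by rewrite scalerA divfK.
by move=> e; rewrite e in nl *; symmetry; exact: normalized_scale_eq.
Qed.

Lemma semioval_between : is_semioval S.
Proof.
split.
- move=> P /(subsetP sU) /in_hermitian [->|[x [y [_ ->]]]].
    exact: normalized_vec3_001.
  exact: normalized_vec3_1.
- by apply/set0Pn; exists pinf; exact: (subsetP s0 _ (pinf_in_skeleton A)).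
move=> P PS; case/in_hermitian: (subsetP sU _ PS) => [PE|[x0 [y0 [P0 PE]]]]; subst P.
  exact: tangent_unique_at_pinf.
exact: tangent_unique_at_pt.
Qed.

End Between.

End Hermitian.

Section HermitianCount.
Variables (F : finFieldType) (q : nat).
Hypothesis qpchar : [pchar F].-nat q.
Hypothesis cardF : #|F| = (q * q)%N.
Hypothesis q_gt1 : (1 < q)%N.

Lemma card_hermitian_aff : #|hermitian_aff F q| = (q * q * q)%N.
Proof.
rewrite (card_pairs (fun x y => traceq q y == normq q x)).
rewrite (eq_bigr (fun _ => q)) ?sum_nat_const ?cardT -?cardE ?cardF // => x _.
exact: (card_traceq_eq qpchar cardF q_gt1 (normq_frob cardF x)).
Qed.

Lemma card_hermitian : #|hermitian F q| = (q * q * q).+1.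
Proof.
rewrite /hermitian cardsU1 card_imset; last by move=> [x y] [x' y'] /pt_inj [/= -> ->].
suff -> : pinf F \notin [set pt xy.1 xy.2 | xy in hermitian_aff F q] by rewrite card_hermitian_aff.
by apply/imsetP => -[xy _ /eqP]; rewrite eq_sym (negbTE (pt_neq_pinf _ _)).
Qed.

Lemma card_skeleton_le (A : {set F}) : (#|skeleton q A| <= 1 + q * #|A| + (q * q - #|A|))%N.
Proof.
rewrite -cardF -(cardsC A) addKn.
apply: leq_trans (leq_card_setU _ _) _; rewrite cards1 -addnA leq_add2l.
apply: leq_trans (leq_card_setU _ _) _; apply: leq_add; last exact: leq_imset_card.
apply: leq_trans (leq_imset_card _ _) _.
have -> : [set xy in hermitian_aff F q | xy.1 \in A] =
          [set xy : F * F | (traceq q xy.2 == normq q xy.1) && (xy.1 \in A)].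
  by apply/setP => xy; rewrite !inE.
rewrite (card_pairs (fun x y => (traceq q y == normq q x) && (x \in A))).
rewrite mulnC -sum_nat_const (bigID (fun x => x \in A)) /= -[X in (_ <= X)%N]addn0.
apply: leq_add.
  apply: leq_sum => x xA; apply: leq_trans _ (card_traceq_eq_le qpchar q_gt1 (normq q x)).
  by apply: subset_leq_card; apply/subsetP => y; rewrite !inE xA andbT.
rewrite leqn0 sum_nat_eq0; apply/forallP => x; apply/implyP => xA.
by rewrite cards_eq0; apply/eqP/setP => y; rewrite !inE (negbTE xA) andbF.
Qed.

Lemma exists_meets_circles_twice a :
  ((q * q) ^ 2 * ((q * q).+1 * (q * q - q) ^ a) < (q * q) ^ a)%N ->
  exists A : {set F}, (#|A| <= a)%N /\ meets_circles_twice q A.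
Proof.
(* [w = 0] is replaced by [1] so that the circles are indexed by all of [F * F]. *)
pose E (zw : F * F) := circle q zw.1 (if zw.2 == 0 then 1 else zw.2).
move=> ha; have [||A [cA hA]] := @exists_set_meeting_twice F _ E a q.
- move=> [z w]; apply: (card_circle qpchar cardF q_gt1).
  by case: ifP => [_|/negbT //]; rewrite oner_neq0.
- by move: ha; rewrite card_prod cardF !expnS expn0 muln1.
exists A; split => // z w w0; have := hA (z, w); rewrite /E /= (negbTE w0); exact.
Qed.

End HermitianCount.

Local Close Scope ring_scope.

Lemma powE m n : Nat.pow m n = expn m n.
Proof. by elim: n => //= n IH; rewrite expnS IH. Qed.

Lemma semioval_budget (q k : nat) : (27 < q)%N -> Z.le (semioval_lb q) (Z.of_nat k) ->
  exists a, ((q * q) ^ 2 * ((q * q).+1 * (q * q - q) ^ a) < (q * q) ^ a)%N /\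
    forall x, (x <= a)%N -> (x <= q * q)%N -> (1 + q * x + (q * q - x) <= k)%N.
Proof.
move=> q27 hk; have q28 : (28 <= q)%coq_nat by apply/leP.
have [L [L2 [hL /leP hkL]]] := semioval_lb_ceil q k q28 hk.
exists (q * (L - 2))%N; split.
  by apply/ltP; rewrite -!powE; exact: random_tuple_bound_nat.
move=> x xa xq; apply: leq_trans hkL; move/leP: L2; nia.
Qed.

Lemma pnat_pchar_of_card (F : finFieldType) p m n : prime p -> #|F| = (p ^ m)%N ->
  [pchar F]%R.-nat (p ^ n)%N.
Proof.
move=> pp cF; have pc : p \in [pchar F]%R := card_finPcharP cF pp.
by rewrite (eq_pnat _ (pcharf_eq pc)) pnatX pnat_id.
Qed.

Theorem mainTheorem8 (q : nat) (F : finFieldType) (k : nat) :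
  (exists p n : nat, [/\ prime p, (0 < n)%N & q = p ^ n]) ->
  odd q -> (27 < q)%N ->
  #|F| = (q ^ 2)%N ->
  Z.le (semioval_lb q) (Z.of_nat k) -> (k <= q ^ 3 + 1)%N ->
  exists S : {set 'rV[F]_3}, is_semioval S /\ #|S| = k.
Proof.
move=> [p [n [pp _ qE]]] _ q27 cF hk kq3.
have cardF : #|F| = (q * q)%N by rewrite cF mulnn.
have q_gt1 : (1 < q)%N by lia.
have qpchar : [pchar F]%R.-nat q.
  by rewrite qE; apply: (pnat_pchar_of_card (m := (n * 2)%N)); rewrite // cF qE -expnM.
have [a [ha hka]] := semioval_budget q27 hk.
have [A [cA hA]] := exists_meets_circles_twice qpchar cardF q_gt1 ha.
have cS : (#|skeleton q A| <= k)%N.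
  apply: leq_trans (card_skeleton_le qpchar cardF q_gt1 A) (hka _ cA _).
  by rewrite -cardF max_card.
have cU : (k <= #|hermitian F q|)%N.
  by rewrite (card_hermitian qpchar cardF q_gt1) (leq_trans kq3) // addn1 !expnS expn0 muln1 mulnA.
have [S [s0 sU <-]] := exists_set_between (skeleton_sub qpchar cardF q_gt1 A) cS cU.
by exists S; split => //; exact: semioval_between hA s0 sU.
Qed.
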